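(* Let $R$ be any binary relation on $U$. Then $\mathrm{DM(RS)}$ is a subdirect product of the complete lattices $\wp(U)^{\blacktriangledown}$ and $\wp(U)^{\blacktriangle}$; that is, $\mathrm{DM(RS)}$ is a complete sublattice of $\wp(U)^{\blacktriangledown}\times\wp(U)^{\blacktriangle}$ and both canonical projections restricted to $\mathrm{DM(RS)}$ are surjective onto $\wp(U)^{\blacktriangledown}$ and $\wp(U)^{\blacktriangle}$ respectively.
   Context: Let $U$ be a set and $R\subseteq U\times U$ a binary relation. For $x\in U$, $R(x)=\{y\in U\mid (x,y)\in R\}$ and $\breve R(x)=\{y\in U\mid (y,x)\in R\}$. For $X\subseteq U$: $X^{\blacktriangledown}=\{x\in U\mid R(x)\subseteq X\}$, $X^{\blacktriangle}=\{x\in U\mid R(x)\cap X\neq\emptyset\}$, $X^{\triangledown}=\{x\in U\mid \breve R(x)\subseteq X\}$, $X^{\vartriangle}=\{x\in U\mid \breve R(x)\cap X\neq\emptyset\}$; composites like $X^{\vartriangle\blacktriangledown}$ mean $(X^{\vartriangle})^{\blacktriangledown}$. $\wp(U)^{\blacktriangledown}=\{X^{\blacktriangledown}\mid X\subseteq U\}$ is a complete lattice under $\subseteq$ with meets $\bigcap$ and joins $(\bigcup_i X_i)^{\vartriangle\blacktriangledown}$; $\wp(U)^{\blacktriangle}=\{X^{\blacktriangle}\mid X\subseteq U\}$ is a complete lattice with joins $\bigcup$ and meets $(\bigcap_iY_i)^{\triangledown\blacktriangle}$; their product is ordered coordinatewise. $\mathcal S=\{x\in U\mid |R(x)|=1\}$.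 $\mathrm{RS}=\{(X^{\blacktriangledown},X^{\blacktriangle})\mid X\subseteq U\}$ ordered coordinatewise; $\mathrm{DM(RS)}$ is its Dedekind–MacNeille completion, identified with $\{(A,B)\in\wp(U)^{\blacktriangledown}\times\wp(U)^{\blacktriangle}\mid A^{\vartriangle\blacktriangle}\subseteq B,\ A\cap\mathcal S=B\cap\mathcal S\}$, whose arbitrary meets and joins are $\bigwedge_i(X_i,Y_i)=(\bigcap_iX_i,(\bigcap_iY_i)^{\triangledown\blacktriangle})$ and $\bigvee_i(X_i,Y_i)=((\bigcup_iX_i)^{\vartriangle\blacktriangledown},\bigcup_iY_i)$. *)

Definition subset {U : Type} (X Y : U -> Prop) : Prop := forall x, X x -> Y x.
Definition seteq {U : Type} (X Y : U -> Prop) : Prop := forall x, X x <-> Y x.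

(* R(x) = {y | R x y},  R^breve(x) = {y | R y x} *)
(* X^{black down triangle} = {x | R(x) ⊆ X} *)
Definition boxD {U : Type} (R : U -> U -> Prop) (X : U -> Prop) : U -> Prop :=
  fun x => forall y, R x y -> X y.
(* X^{black up triangle} = {x | R(x) ∩ X ≠ ∅} *)
Definition diaD {U : Type} (R : U -> U -> Prop) (X : U -> Prop) : U -> Prop :=
  fun x => exists y, R x y /\ X y.
(* X^{white down triangle} = {x | R^breve(x) ⊆ X} *)
Definition boxU {U : Type} (R : U -> U -> Prop) (X : U -> Prop) : U -> Prop :=
  fun x => forall y, R y x -> X y.
(* X^{white up triangle} = {x | R^breve(x) ∩ X ≠ ∅} *)
Definition diaU {U : Type} (R : U -> U -> Prop) (X : U -> Prop) : U -> Prop :=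
  fun x => exists y, R y x /\ X y.

(* S = {x | |R(x)| = 1} *)
Definition Sing {U : Type} (R : U -> U -> Prop) : U -> Prop :=
  fun x => exists y, R x y /\ forall z, R x z -> z = y.

Definition inBoxD {U : Type} (R : U -> U -> Prop) (A : U -> Prop) : Prop :=
  exists X, seteq A (boxD R X).
Definition inDiaD {U : Type} (R : U -> U -> Prop) (B : U -> Prop) : Prop :=
  exists X, seteq B (diaD R X).

(* DM(RS), identified with the set of pairs (A,B) ∈ ℘(U)^▼ × ℘(U)^▲ with
   A^{△▲} ⊆ B and A ∩ S = B ∩ S. *)
Definition DMRS {U : Type} (R : U -> U -> Prop) (A B : U -> Prop) : Prop :=
  inBoxD R A /\ inDiaD R B /\ subset (diaD R (diaU R A)) B /\
  seteq (fun x => A x /\ Sing R x) (fun x => B x /\ Sing R x).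

(* Arbitrary meets and joins in the product lattice ℘(U)^▼ × ℘(U)^▲
   of a family (FA i, FB i)_{i ∈ I}:
   meet = (⋂ FA_i, (⋂ FB_i)^{▽▲}),  join = ((⋃ FA_i)^{△▼}, ⋃ FB_i). *)
Definition bigcap {U I : Type} (F : I -> U -> Prop) : U -> Prop :=
  fun x => forall i, F i x.
Definition bigcup {U I : Type} (F : I -> U -> Prop) : U -> Prop :=
  fun x => exists i, F i x.

Definition prodMeetA {U I : Type} (R : U -> U -> Prop) (FA FB : I -> U -> Prop)
  : U -> Prop := bigcap FA.
Definition prodMeetB {U I : Type} (R : U -> U -> Prop) (FA FB : I -> U -> Prop)
  : U -> Prop := diaD R (boxU R (bigcap FB)).
Definition prodJoinA {U I : Type} (R : U -> U -> Prop) (FA FB : I -> U -> Prop)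
  : U -> Prop := boxD R (diaU R (bigcup FA)).
Definition prodJoinB {U I : Type} (R : U -> U -> Prop) (FA FB : I -> U -> Prop)
  : U -> Prop := bigcup FB.


(* The four operators form two Galois connections, [diaU -| boxD] and
   [diaD -| boxU], so ℘(U)^▼ and ℘(U)^▲ are exactly the fixed points of the
   closure [boxD ∘ diaU] and of the interior [diaD ∘ boxU]; hence ℘(U)^▼ is
   closed under intersections and ℘(U)^▲ under unions.  On a point x with a
   unique R-successor y, both [boxD W x] and [diaD W x] just say [W y], which
   is all that is needed for the condition on the singleton part S. *)

Section Galois.

Variables (U : Type) (R : U -> U -> Prop).

Lemma sub_boxD_diaU (X : U -> Prop) : subset X (boxD R (diaU R X)).
Proof. intros x Hx y Hxy; exists x; auto. Qed.

Lemma diaD_boxU_sub (Y : U -> Prop) : subset (diaD R (boxU R Y)) Y.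
Proof. intros x [y [Hxy Hy]]; auto. Qed.

Lemma diaU_boxD_sub (X : U -> Prop) : subset (diaU R (boxD R X)) X.
Proof. intros y [x [Hxy Hx]]; auto. Qed.

Lemma inBoxD_boxD_diaU (A : U -> Prop) :
  inBoxD R A -> subset (boxD R (diaU R A)) A.
Proof.
  intros [X HX] x Hx; apply HX; intros y Hxy.
  destruct (Hx y Hxy) as [z [Hzy Hz]].
  exact (proj1 (HX z) Hz y Hzy).
Qed.

Lemma inDiaD_diaD_boxU (B : U -> Prop) :
  inDiaD R B -> subset B (diaD R (boxU R B)).
Proof.
  intros [Y HY] x Hx.
  destruct (proj1 (HY x) Hx) as [y [Hxy Hy]].
  exists y; split; [exact Hxy |].
  intros z Hzy; apply HY; exists y; auto.
Qed.

Lemma inBoxD_boxD (X : U -> Prop) : inBoxD R (boxD R X).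
Proof. exists X; intro x; split; auto. Qed.

Lemma inDiaD_diaD (Y : U -> Prop) : inDiaD R (diaD R Y).
Proof. exists Y; intro x; split; auto. Qed.

Lemma inBoxD_bigcap (I : Type) (F : I -> U -> Prop) :
  (forall i, inBoxD R (F i)) -> inBoxD R (bigcap F).
Proof.
  intros HF; exists (bigcap (fun i => diaU R (F i))); intro x; split.
  - intros Hx y Hxy i; exact (sub_boxD_diaU (F i) x (Hx i) y Hxy).
  - intros Hx i; apply (inBoxD_boxD_diaU (F i) (HF i)).
    intros y Hxy; exact (Hx y Hxy i).
Qed.

Lemma inDiaD_bigcup (I : Type) (F : I -> U -> Prop) :
  (forall i, inDiaD R (F i)) -> inDiaD R (bigcup F).
Proof.
  intros HF; exists (bigcup (fun i => boxU R (F i))); intro x; split.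
  - intros [i Hi].
    destruct (inDiaD_diaD_boxU (F i) (HF i) x Hi) as [y [Hxy Hy]].
    exists y; split; [exact Hxy | exists i; exact Hy].
  - intros [y [Hxy [i Hi]]]; exists i; exact (Hi x Hxy).
Qed.

Lemma Sing_diaD_boxD (W : U -> Prop) (x : U) :
  Sing R x -> diaD R W x -> boxD R W x.
Proof.
  intros [y [_ Huniq]] [z [Hxz Hz]] w Hxw.
  rewrite (Huniq w Hxw), <- (Huniq z Hxz); exact Hz.
Qed.

Lemma Sing_diaD_diaU (A : U -> Prop) (x : U) :
  Sing R x -> A x -> diaD R (diaU R A) x.
Proof. intros [y [Hxy _]] Hx; exists y; split; [| exists x]; auto. Qed.

(* On S the inclusion [A ⊆ B] is forced by [diaD (diaU A) ⊆ B]. *)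
Lemma DMRS_intro (A B : U -> Prop) :
  inBoxD R A -> inDiaD R B -> subset (diaD R (diaU R A)) B ->
  (forall x, Sing R x -> B x -> A x) -> DMRS R A B.
Proof.
  intros HA HB Hsub HS; do 3 (split; [assumption |]).
  intro x; split.
  - intros [Hx Hs]; split; [apply Hsub, Sing_diaD_diaU |]; assumption.
  - intros [Hx Hs]; split; [apply HS |]; assumption.
Qed.

Lemma DMRS_Sing (A B : U -> Prop) (x : U) :
  DMRS R A B -> Sing R x -> B x -> A x.
Proof. intros [_ [_ [_ HS]]] Hs Hx; exact (proj1 (proj2 (HS x) (conj Hx Hs))). Qed.

Lemma DMRS_diaD_diaU (A B : U -> Prop) :
  DMRS R A B -> subset (diaD R (diaU R A)) B.
Proof. intros [_ [_ [Hsub _]]]; exact Hsub. Qed.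

Section Family.

Variables (I : Type) (FA FB : I -> U -> Prop).
Hypothesis HF : forall i, DMRS R (FA i) (FB i).

Lemma DMRS_prodMeet : DMRS R (prodMeetA R FA FB) (prodMeetB R FA FB).
Proof.
  apply DMRS_intro.
  - apply inBoxD_bigcap; intro i; apply (HF i).
  - apply inDiaD_diaD.
  - intros x [y [Hxy [z [Hzy Hz]]]]; exists y; split; [exact Hxy |].
    intros w Hwy i; apply (DMRS_diaD_diaU _ _ (HF i)).
    exists y; split; [exact Hwy | exists z; split; [exact Hzy | exact (Hz i)]].
  - intros x Hs Hx i; apply (DMRS_Sing _ _ x (HF i) Hs).
    exact (diaD_boxU_sub (bigcap FB) x Hx i).
Qed.

Lemma DMRS_prodJoin : DMRS R (prodJoinA R FA FB) (prodJoinB R FA FB).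
Proof.
  apply DMRS_intro.
  - apply inBoxD_boxD.
  - apply inDiaD_bigcup; intro i; apply (HF i).
  - intros x [y [Hxy Hy]].
    destruct (diaU_boxD_sub _ y Hy) as [z [Hzy [i Hz]]].
    exists i; apply (DMRS_diaD_diaU _ _ (HF i)).
    exists y; split; [exact Hxy | exists z; auto].
  - intros x Hs [i Hx]; apply sub_boxD_diaU; exists i.
    exact (DMRS_Sing _ _ x (HF i) Hs Hx).
Qed.

End Family.

Lemma DMRS_fst_onto (A : U -> Prop) :
  inBoxD R A -> DMRS R A (diaD R (diaU R A)).
Proof.
  intros HA; apply DMRS_intro; [exact HA | apply inDiaD_diaD | intros x Hx; exact Hx |].
  intros x Hs Hx; apply (inBoxD_boxD_diaU A HA), Sing_diaD_boxD; assumption.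
Qed.

Lemma DMRS_snd_onto (B : U -> Prop) :
  inDiaD R B -> DMRS R (boxD R (boxU R B)) B.
Proof.
  intros HB; apply DMRS_intro; [apply inBoxD_boxD | exact HB | |].
  - intros x [y [Hxy Hy]]; apply diaD_boxU_sub.
    exists y; split; [exact Hxy | exact (diaU_boxD_sub _ y Hy)].
  - intros x Hs Hx; apply Sing_diaD_boxD, inDiaD_diaD_boxU; assumption.
Qed.

End Galois.

Theorem mainTheorem18 (U : Type) (R : U -> U -> Prop) :
  (forall (I : Type) (FA FB : I -> U -> Prop),
      (forall i, DMRS R (FA i) (FB i)) ->
      DMRS R (prodMeetA R FA FB) (prodMeetB R FA FB) /\
      DMRS R (prodJoinA R FA FB) (prodJoinB R FA FB)) /\
  (forall A : U -> Prop, inBoxD R A -> exists B, DMRS R A B) /\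
  (forall B : U -> Prop, inDiaD R B -> exists A, DMRS R A B).
Proof.
  split; [| split].
  - intros I FA FB HF; split; [apply DMRS_prodMeet | apply DMRS_prodJoin]; exact HF.
  - intros A HA; exists (diaD R (diaU R A)); apply DMRS_fst_onto; exact HA.
  - intros B HB; exists (boxD R (boxU R B)); apply DMRS_snd_onto; exact HB.
Qed.
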